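(* Let $F^r$ be the free group of rank $r$ and $s_*\colon F^r\to F^r$ an endomorphism whose image $\mathrm{Im}\,s_*$ is free of rank $r$. Let $s_*^{ab}\colon\mathbb Z^r\to\mathbb Z^r$ be the induced endomorphism of the abelianisation. Then: (1) $\lim^1(s_* )^n$ is trivial if and only if $s_*$ is an isomorphism; (2) if $s_*^{ab}$ is not an isomorphism, then $\lim^1(s_* )^n$ is not trivial.
   Context: $\lim^1(s_* )^n$ denotes $\lim^1$ of the inverse sequence $\cdots\to F^r\xrightarrow{s_*}F^r\xrightarrow{s_*}F^r$. For an inverse sequence of groups $\cdots\to A_1\xrightarrow{a_1}A_0$, $\lim^1$ is the pointed set of classes of $\prod_nA_n$ under $(x_n)\approx(y_n)$ iff $y_n=g_nx_na_{n+1}(g_{n+1}^{-1})$ for some $(g_n)$, based at the class of the identity; trivial means a single point. *)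

(* Concrete model of the free group F^r on generators x_0..x_{r-1}:
   elements are freely reduced words over letters (i, b), where (i,false) = x_i
   and (i,true) = x_i^{-1}. *)
From HB Require Import structures.
From mathcomp Require Import all_boot all_order all_algebra.
Set Implicit Arguments. Unset Strict Implicit. Unset Printing Implicit Defensive.
Import Order.TTheory GRing.Theory Num.Theory.

Definition letter (r : nat) := ('I_r * bool)%type.

Definition cancels r (x y : letter r) : bool := (x.1 == y.1) && (x.2 != y.2).

Definition reduced r (w : seq (letter r)) : bool :=
  sorted (fun x y => ~~ cancels x y) w.

Definition push r (x : letter r) (w : seq (letter r)) : seq (letter r) :=
  match w with
  | y :: w' => if cancels x y then w' else x :: w
  | [::] => [:: x]
  end.

Lemma push_reduced r (x : letter r) w : reduced w -> reduced (push x w).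
Proof.
case: w => [|y w] //= Hw.
case: ifP => Hc.
- exact: (path_sorted Hw).
- by rewrite /reduced /= Hc.
Qed.

Lemma foldr_push_reduced r (u v : seq (letter r)) :
  reduced v -> reduced (foldr (@push r) v u).
Proof. by move=> Hv; elim: u => [|x u IH] //=; apply: push_reduced. Qed.

Record FG (r : nat) := FGmk { fgw : seq (letter r); fgP : reduced fgw }.

Definition fg_one r : FG r := @FGmk r [::] isT.

Definition fg_mul r (u v : FG r) : FG r :=
  FGmk (foldr_push_reduced (fgw u) (fgP v)).

Definition flip r (x : letter r) : letter r := (x.1, ~~ x.2).

Definition fg_inv r (u : FG r) : FG r :=
  @FGmk r (foldr (@push r) [::] (rev (map (@flip r) (fgw u))))
    (foldr_push_reduced _ (isT : reduced (@nil (letter r)))).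

Definition fg_gen r (i : 'I_r) : FG r := @FGmk r [:: (i, false)] isT.

Definition fg_hom r (f : FG r -> FG r) : Prop :=
  forall u v, f (fg_mul u v) = fg_mul (f u) (f v).

(* Im f is a free group of rank r: it is the image of an injective
   homomorphism from F^r *)
Definition image_free_of_rank r (f : FG r -> FG r) : Prop :=
  exists phi : FG r -> FG r,
    [/\ fg_hom phi, injective phi &
        forall y, (exists x, phi x = y) <-> (exists x, f x = y)].

(* lim^1 of the inverse sequence ... -> F^r --s--> F^r --s--> F^r :
   (x_n) ~ (y_n) iff y_n = g_n x_n s(g_{n+1}^{-1}) for some (g_n). *)
Definition lim1_rel r (s : FG r -> FG r) (x y : nat -> FG r) : Prop :=
  exists g : nat -> FG r,
    forall n, y n = fg_mul (fg_mul (g n) (x n)) (s (fg_inv (g n.+1))).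

(* lim^1 is trivial: the pointed set of classes has a single point *)
Definition lim1_trivial r (s : FG r -> FG r) : Prop :=
  forall x y : nat -> FG r, lim1_rel s x y.

(* abelianisation map F^r -> Z^r (exponent sums) *)
Local Open Scope ring_scope.
Definition fg_ab r (u : FG r) : 'rV[int]_r :=
  \sum_(x <- fgw u) (if x.2 then -1 else 1) *: delta_mx 0 x.1.

Definition ab_map r (s : FG r -> FG r) (v : 'rV[int]_r) : 'rV[int]_r :=
  \sum_(i < r) v 0 i *: fg_ab (s (fg_gen i)).

(* Since Im s is free of rank r, s factors as an injective map after a
   surjective endomorphism of F^r; free groups of finite rank are residually
   finite, hence Hopfian, so s is injective.  If s is bijective, a sequence
   (g_n) relating any two elements of prod F^r is solved for recursively.  If
   s is injective but misses c, take x = 1 and y_n in {1, c}: the relation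
   g_n = y_n s(g_(n+1)) forces y_n to record whether g_n lies in Im s and
   determines g_(n+1) from g_n, so (g_n) is determined by g_0; as F^r is
   countable, a diagonal choice of y defeats every g_0.  Part (2) follows
   because an automorphism induces an automorphism of Z^r. *)

From HB Require Import structures.
From mathcomp Require Import all_boot all_order all_algebra all_fingroup.
From Stdlib Require Import Classical ClassicalEpsilon.
Set Implicit Arguments. Unset Strict Implicit. Unset Printing Implicit Defensive.

Section ReducedWords.
Variable r : nat.
Implicit Types (x y z : letter r) (a b w : seq (letter r)).

Definition mulw a b := foldr (@push r) b a.
Definition invw a := rev (map (@flip r) a).

Lemma cancels_trans x y z : cancels x y -> cancels y z -> x = z.
Proof.
case: x y z => [i b] [j c] [k d]; rewrite /cancels /=.
by case/andP=> /eqP -> + /andP[/eqP -> +]; case: b c d => [] [] [].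
Qed.

Lemma push_cons x w : reduced (x :: w) -> push x w = x :: w.
Proof. by case: w => [|y w] //= /andP[/negbTE ->]. Qed.

Lemma push_pushK x y w : reduced w -> cancels x y -> push x (push y w) = w.
Proof.
case: w => [|z w] /=; first by move=> _ ->.
move=> w_red xy; case: ifP => [yz | /= _]; last by rewrite xy.
by rewrite (cancels_trans xy yz); apply: push_cons.
Qed.

Lemma mulw_reduced a b : reduced b -> reduced (mulw a b).
Proof. exact: foldr_push_reduced. Qed.

Lemma mulw_push x a w : reduced w -> mulw (push x a) w = push x (mulw a w).
Proof.
move=> w_red; case: a => [|y a] //=; case: ifP => // xy.
by rewrite push_pushK // mulw_reduced.
Qed.

Lemma mulwA a b w : reduced w -> mulw (mulw a b) w = mulw a (mulw b w).
Proof.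
by move=> w_red; elim: a => //= x a IHa; rewrite mulw_push ?IHa ?mulw_reduced.
Qed.

Lemma mulw0 a : reduced a -> mulw a [::] = a.
Proof.
elim: a => //= x a IHa xa_red.
by rewrite IHa ?push_cons //; apply: path_sorted xa_red.
Qed.

Lemma invwK : involutive invw.
Proof.
move=> a; rewrite /invw map_rev revK -map_comp map_id_in // => -[i b] _.
by rewrite /flip /= negbK.
Qed.

Lemma mulKw a w : reduced w -> mulw (invw a) (mulw a w) = w.
Proof.
move=> w_red; elim: a => //= x a IHa.
rewrite /invw map_cons rev_cons /mulw foldr_rcons push_pushK ?mulw_reduced //.
by rewrite /cancels /= eqxx; case: (x.2).
Qed.

End ReducedWords.

Section FreeGroupLaws.
Variable r : nat.
Implicit Types u v w : FG r.

HB.instance Definition _ := [isSub for @fgw r].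
HB.instance Definition _ := [Countable of FG r by <:].

Lemma fgw_inj : injective (@fgw r). Proof. exact: val_inj. Qed.

Lemma fgw_mul u v : fgw (fg_mul u v) = mulw (fgw u) (fgw v).
Proof. by []. Qed.

Lemma fgw_inv u : fgw (fg_inv u) = mulw (invw (fgw u)) [::].
Proof. by []. Qed.

Lemma fg_mulA : associative (@fg_mul r).
Proof. by move=> u v w; apply: fgw_inj; rewrite !fgw_mul mulwA // fgP. Qed.

Lemma fg_mul1 : left_id (fg_one r) (@fg_mul r).
Proof. by move=> u; apply: fgw_inj. Qed.

Lemma fg_mulg1 : right_id (fg_one r) (@fg_mul r).
Proof. by move=> u; apply: fgw_inj; rewrite fgw_mul mulw0 // fgP. Qed.

Lemma fg_mulV : left_inverse (fg_one r) (@fg_inv r) (@fg_mul r).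
Proof.
move=> u; apply: fgw_inj; rewrite fgw_mul fgw_inv mulwA ?fgP //.
by rewrite -[X in mulw _ X](mulw0 (fgP u)) mulKw ?fgP.
Qed.

Lemma fg_mulgV : right_inverse (fg_one r) (@fg_inv r) (@fg_mul r).
Proof.
by move=> u; apply: fgw_inj; rewrite fgw_mul fgw_inv -{1}[fgw u]invwK mulKw.
Qed.

End FreeGroupLaws.

HB.instance Definition _ r := isGroup.Build (FG r) (@fg_mulA r) (@fg_mul1 r)
  (@fg_mulg1 r) (@fg_mulV r) (@fg_mulgV r).

Open Scope group_scope.

Section GroupMorphism.
Variables (G H : groupType) (f : G -> H).
Hypothesis fM : {morph f : x y / x * y}.

Lemma morph_mul1 : f 1 = 1.
Proof. by apply: (mulgI (f 1)); rewrite -fM !mulg1. Qed.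

Lemma morph_mulV : {morph f : x / x^-1}.
Proof. by move=> x; apply/esym/mulg1_eq; rewrite -fM mulgV morph_mul1. Qed.

End GroupMorphism.

Section Letters.
Variable r : nat.

Definition fg_letter (x : letter r) : FG r := @FGmk r [:: x] isT.

Lemma fg_letter_gen i : fg_letter (i, false) = fg_gen i.
Proof. exact: fgw_inj. Qed.

Lemma fg_letter_inv i : fg_letter (i, true) = (fg_gen i)^-1.
Proof. exact: fgw_inj. Qed.

Lemma fg_ind (P : FG r -> Prop) :
  P 1 -> (forall x u, P u -> P (fg_letter x * u)) -> forall u, P u.
Proof.
move=> P1 PM [w w_red]; elim: w w_red => [|x w IHw] xw_red.
  by rewrite (_ : FGmk _ = 1) //; apply: fgw_inj.
have w_red : reduced w := path_sorted xw_red.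
rewrite (_ : FGmk _ = fg_letter x * FGmk w_red); first exact/PM/IHw.
by apply: fgw_inj; rewrite fgw_mul /= push_cons.
Qed.

End Letters.

Section Evaluation.
Variables (r : nat) (G : groupType) (a : 'I_r -> G).

Definition eval_letter (x : letter r) : G := if x.2 then (a x.1)^-1 else a x.1.

Definition fg_eval (u : FG r) : G := \prod_(x <- fgw u) eval_letter x.

Lemma eval_letter_cancel x y : cancels x y -> eval_letter x * eval_letter y = 1.
Proof.
by case: x y => [i [] ] [j [] ]; rewrite /cancels /eval_letter /= => /andP[/eqP<-];
  rewrite ?mulVg ?mulgV.
Qed.

Lemma eval_push x w :
  \prod_(z <- push x w) eval_letter z = eval_letter x * \prod_(z <- w) eval_letter z.
Proof.
case: w => [|y w] /=; first by rewrite big_seq1 big_nil mulg1.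
case: ifP => xy; last by rewrite big_cons.
by rewrite big_cons mulgA eval_letter_cancel ?mul1g.
Qed.

Lemma fg_evalM : {morph fg_eval : u v / u * v}.
Proof.
move=> u v; rewrite /fg_eval fgw_mul.
elim: (fgw u) => [|x w IHw] /=; first by rewrite big_nil mul1g.
by rewrite eval_push IHw big_cons mulgA.
Qed.

Lemma fg_eval_letter x : fg_eval (fg_letter x) = eval_letter x.
Proof. exact: big_seq1. Qed.

Lemma fg_eval_gen i : fg_eval (fg_gen i) = a i.
Proof. exact: big_seq1. Qed.

End Evaluation.

Lemma eq_fg_eval r (G : groupType) (a b : 'I_r -> G) :
  a =1 b -> fg_eval a =1 fg_eval b.
Proof. by move=> ab u; apply: eq_bigr => -[i e] _; rewrite /eval_letter ab. Qed.

Lemma morph_fg_eval r (G : groupType) (f : FG r -> G) :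
  {morph f : u v / u * v} -> f =1 fg_eval (f \o @fg_gen r).
Proof.
move=> fM; elim/fg_ind => [|[i e] u IHu].
  by rewrite (morph_mul1 fM) /fg_eval big_nil.
rewrite fM fg_evalM IHu fg_eval_letter; congr (_ * _).
by case: e; rewrite /eval_letter /= ?fg_letter_inv ?(morph_mulV fM) ?fg_letter_gen.
Qed.

Lemma perm_extend_in (T : finType) (D : {set T}) (f : T -> T) :
  {in D &, injective f} -> {p : {perm T} | {in D, p =1 f}}.
Proof.
move=> f_inj; pose C1 := enum (~: D); pose C2 := enum (~: (f @: D)).
have size_C : size C1 = size C2.
  apply/eqP; rewrite -!cardE -(eqn_add2l #|D|) cardsC.
  by rewrite -{1}(card_in_imset f_inj) cardsC.
pose g x := if x \in D then f x else nth x C2 (index x C1).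
have gC x : x \notin D -> g x \notin f @: D.
  move=> xD; rewrite /g (negbTE xD) -in_setC -mem_enum mem_nth //.
  by rewrite -size_C index_mem mem_enum inE.
have g_inj : injective g.
  move=> x y; case xD: (x \in D); case yD: (y \in D).
  - by rewrite /g xD yD; apply: f_inj.
  - by move=> gxy; have := gC y (negbT yD); rewrite -gxy /g xD imset_f.
  - by move=> gxy; have := gC x (negbT xD); rewrite gxy /g yD imset_f.
  have x1 : x \in C1 by rewrite mem_enum inE xD.
  have y1 : y \in C1 by rewrite mem_enum inE yD.
  rewrite /g xD yD (set_nth_default y) -?size_C ?index_mem //.
  by move/eqP; rewrite nth_uniq ?enum_uniq -?size_C ?index_mem // => /eqP/index_inj->.
by exists (perm g_inj) => x xD; rewrite permE /g xD.
Qed.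

(* Generator i moves k to k+1 across each letter x_i at position k of w and
   k+1 to k across each letter x_i^-1; reducedness of w makes this partial map
   injective, and any permutation extending it moves 0 to size w along w. *)
Section WordRepresentation.
Variables (r : nat) (x0 : letter r) (w : seq (letter r)).
Hypothesis w_red : reduced w.

Let m := size w.
Let fwd i k := (k < m) && (nth x0 w k == (i, false)).
Let bwd i k := (0 < k <= m) && (nth x0 w k.-1 == (i, true)).
Let step i (k : 'I_m.+1) : 'I_m.+1 := inord (if fwd i k then k.+1 else k.-1).
Let dom i := [set k : 'I_m.+1 | fwd i k || bwd i k].

Lemma reduced_nth k : k.+1 < m -> ~~ cancels (nth x0 w k) (nth x0 w k.+1).
Proof. by rewrite /m; case: w w_red => [|x w'] //= /(pathP x0) nth_ok; apply: nth_ok. Qed.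

Let step_val i k : step i k = (if fwd i k then k.+1 else k.-1) :> nat.
Proof.
rewrite /step inordK //; case: ifP => [/andP[]//|_].
exact: leq_ltn_trans (leq_pred k) (ltn_ord k).
Qed.

Let step_inj i : {in dom i &, injective (step i)}.
Proof.
have fwd_bwd k : fwd i k -> bwd i k.+2 -> False.
  case/andP=> _ /eqP wk /andP[/andP[_ k2m] /eqP wk1].
  by have := reduced_nth k2m; rewrite wk wk1 /cancels /= eqxx.
move=> k l; rewrite !inE => kD lD /(congr1 (@nat_of_ord _)); rewrite !step_val => kl.
apply: val_inj; move: kD lD kl.
case fk: (fwd i k); case fl: (fwd i l) => //= kD lD.
- by case.
- move=> kl; case: (fwd_bwd k) => //.
  by rewrite kl prednK //; case/andP: lD => /andP[].
- move=> kl; case: (fwd_bwd l) => //.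
  by rewrite -kl prednK //; case/andP: kD => /andP[].
case/andP: kD => /andP[k0 _] _; case/andP: lD => /andP[l0 _] _.
by move/(congr1 S); rewrite !prednK.
Qed.

Definition word_rep i : {perm 'I_m.+1} := sval (perm_extend_in (@step_inj i)).

Let word_repE i : {in dom i, word_rep i =1 step i}.
Proof. exact: svalP (perm_extend_in (@step_inj i)). Qed.

Lemma word_rep_letter k :
  k < m -> eval_letter word_rep (nth x0 w k) (inord k) = inord k.+1.
Proof.
move=> km; have k_le : k <= m := ltnW km.
case wk: (nth x0 w k) => [i []]; rewrite /eval_letter /=.
- have k1D : (inord k.+1 : 'I_m.+1) \in dom i.
    by rewrite inE /bwd inordK //= km wk eqxx orbT.
  apply: (canLR (permK _)); rewrite word_repE //; apply: ord_inj.
  rewrite step_val !inordK // /fwd; case: ifP => // /andP[k1m /eqP wk1].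
  by have := reduced_nth k1m; rewrite wk wk1 /cancels /= eqxx.
- have kD : (inord k : 'I_m.+1) \in dom i by rewrite inE /fwd inordK // km wk eqxx.
  by rewrite word_repE //; apply: ord_inj; rewrite step_val /fwd !inordK // km wk eqxx.
Qed.

Lemma word_rep_drop n k :
  k + n = m -> (\prod_(x <- drop k w) eval_letter word_rep x) (inord k) = inord m.
Proof.
elim: n k => [|n IHn] k; first by rewrite addn0 => ->; rewrite drop_size big_nil perm1.
move=> kn; have km : k < m by rewrite -kn -addSnnS leq_addr.
by rewrite (drop_nth x0 km) big_cons permM word_rep_letter // IHn // addSnnS.
Qed.

End WordRepresentation.

Lemma fg_residually_finite r (u : FG r) :
  u != 1 -> exists N (a : 'I_r -> {perm 'I_N}), fg_eval a u != 1.
Proof.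
case: u => -[|x w] w_red u1; first by case/eqP: u1; apply: fgw_inj.
exists (size (x :: w)).+1, (word_rep x w_red); apply/negP=> /eqP/permP/(_ (inord 0)).
have := word_rep_drop x w_red (add0n _); rewrite drop0 => -> /(congr1 (@nat_of_ord _)).
by rewrite perm1 !inordK.
Qed.

Lemma fg_hopfian r (p : FG r -> FG r) :
  {morph p : u v / u * v} -> (forall v, exists u, p u = v) -> injective p.
Proof.
move=> pM p_surj.
suff ker1 u : p u = 1 -> u = 1.
  by move=> u v puv; apply/divg1_eq/ker1; rewrite pM (morph_mulV pM) puv mulgV.
move=> pu1; have [//|/fg_residually_finite[N [a au]]] := eqVneq u 1.
pose T (b : {ffun 'I_r -> {perm 'I_N}}) := [ffun i => fg_eval b (p (fg_gen i))].
have evalT b v : fg_eval (T b) v = fg_eval b (p v).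
  have bpM : {morph fg_eval b \o p : x y / x * y} by move=> x y /=; rewrite pM fg_evalM.
  by rewrite [RHS](morph_fg_eval bpM v); apply: eq_fg_eval => i; rewrite ffunE.
have T_inj : injective T.
  move=> b b' Tbb'; apply/ffunP => i; have [v pv] := p_surj (fg_gen i).
  by rewrite -(fg_eval_gen b) -(fg_eval_gen b') -pv -!evalT Tbb'.
have [Tinv _ TinvK] := injF_bij T_inj.
move: au; rewrite (@eq_fg_eval _ _ a [ffun i => a i]) => [|i]; last by rewrite ffunE.
by rewrite -(TinvK [ffun i => a i]) evalT pu1 /fg_eval big_nil eqxx.
Qed.

Section PickPreimage.
Variables (A B : Type) (a0 : A) (f : A -> B).

Definition pick_preim (b : B) : A := epsilon (inhabits a0) (fun a => f a = b).

Lemma pick_preimP b : (exists a, f a = b) -> f (pick_preim b) = b.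
Proof. exact: epsilon_spec. Qed.

Lemma pick_preimK : injective f -> cancel f pick_preim.
Proof. by move=> f_inj a; apply: f_inj; apply: pick_preimP; exists a. Qed.

Lemma inj_surj_bij : injective f -> (forall b, exists a, f a = b) -> bijective f.
Proof.
move=> f_inj f_surj; exists pick_preim; first exact: pick_preimK.
by move=> b; apply: pick_preimP.
Qed.

End PickPreimage.

Lemma image_free_of_rank_inj r (s : FG r -> FG r) :
  {morph s : u v / u * v} -> image_free_of_rank s -> injective s.
Proof.
move=> sM [phi [phiM phi_inj im_phi]].
have {}phiM : {morph phi : u v / u * v} := phiM.
pose psi u := @pick_preim (FG r) _ 1 phi (s u).
have phi_psi u : phi (psi u) = s u by apply/pick_preimP/im_phi; exists u.
have psiM : {morph psi : u v / u * v}.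
  by move=> u v; apply: phi_inj; rewrite phiM !phi_psi sM.
have psi_surj v : exists u, psi u = v.
  have [u su] := proj1 (im_phi (phi v)) (ex_intro _ v erefl).
  by exists u; apply: phi_inj; rewrite phi_psi.
by move=> u v suv; apply: (fg_hopfian psiM psi_surj); apply: phi_inj; rewrite !phi_psi.
Qed.

Lemma lim1_relP r (s : FG r -> FG r) (x y : nat -> FG r) :
  lim1_rel s x y <-> exists g : nat -> FG r, forall n, y n = g n * x n * s (g n.+1)^-1.
Proof. by []. Qed.

Lemma bij_lim1_trivial r (s : FG r -> FG r) : bijective s -> lim1_trivial s.
Proof.
move=> [t st ts] x y; apply/lim1_relP.
exists (fix g n := if n is n'.+1 then (t ((g n' * x n')^-1 * y n'))^-1 else 1) => n.
by rewrite /= invgK ts mulVKg.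
Qed.

Section Lim1Diagonal.
Variables (r : nat) (s : FG r -> FG r) (c : FG r).
Hypotheses (sM : {morph s : u v / u * v}) (s_inj : injective s).
Hypothesis c_notin_image : forall u, s u <> c.

Let pre := @pick_preim (FG r) _ 1 s.

(* [s (pre z) == z] decides whether z lies in the image of s. *)
Definition lim1_shift (z : FG r) : FG r :=
  pre (if s (pre z) == z then z else c^-1 * z).

Lemma lim1_shift_step (g : nat -> FG r) (d : nat -> bool) n :
  g n = (if d n then c else 1) * s (g n.+1) ->
  d n = (s (pre (g n)) != g n) /\ lim1_shift (g n) = g n.+1.
Proof.
rewrite /lim1_shift; case: (d n) => gn.
  have gn_out : s (pre (g n)) != g n.
    apply/eqP=> spre; have /c_notin_image[] : s (pre (g n) * (g n.+1)^-1) = c.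
    by rewrite sM (morph_mulV sM) spre gn mulgK.
  by rewrite (negbTE gn_out) gn mulKg /pre pick_preimK.
by rewrite mul1g in gn; rewrite gn /pre pick_preimK // eqxx pick_preimK.
Qed.

Lemma lim1_nontrivial_of_not_surj : ~ lim1_trivial s.
Proof.
pose e n := odflt 1 (@unpickle (FG r) n).
pose z n := iter n lim1_shift (e n).
pose d n := s (pre (z n)) == z n.
move=> /(_ (fun=> 1) (fun n => if d n then c else 1)) /lim1_relP[g gP].
have {}gP n : g n = (if d n then c else 1) * s (g n.+1).
  by rewrite gP mulg1 (morph_mulV sM) mulgVK.
have orbit n : g n = iter n lim1_shift (g 0).
  by elim: n => //= n <-; case: (lim1_shift_step (gP n)).
pose N := pickle (g 0).
have zN : z N = g N by rewrite /z /e pickleK /= -orbit.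
by case: (lim1_shift_step (gP N)); rewrite /d zN; case: eqP.
Qed.

End Lim1Diagonal.

Lemma lim1_trivial_surj r (s : FG r -> FG r) :
  {morph s : u v / u * v} -> injective s -> lim1_trivial s -> forall z, exists u, s u = z.
Proof.
move=> sM s_inj s_lim1 z; apply: NNPP => z_out.
apply: (lim1_nontrivial_of_not_surj (c := z) sM s_inj) => // u su.
by apply: z_out; exists u.
Qed.

Section Abelianisation.
Variable r : nat.
Implicit Types (s t : FG r -> FG r) (u v : FG r).
Import GRing.Theory.
Local Open Scope ring_scope.

Definition ab_letter (x : letter r) : 'rV[int]_r :=
  (if x.2 then -1 else 1) *: delta_mx 0 x.1.

Lemma ab_letter_cancel x y : cancels x y -> ab_letter x + ab_letter y = 0.
Proof.
case: x y => [i [] ] [j [] ]; rewrite /cancels /ab_letter /= => /andP[/eqP<-] //= _.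
  by rewrite scaleN1r scale1r addNr.
by rewrite scaleN1r scale1r subrr.
Qed.

Lemma ab_push x w :
  \sum_(z <- push x w) ab_letter z = ab_letter x + \sum_(z <- w) ab_letter z.
Proof.
case: w => [|y w] /=; first by rewrite big_seq1 big_nil addr0.
case: ifP => xy; last by rewrite big_cons.
by rewrite big_cons addrA ab_letter_cancel ?add0r.
Qed.

Lemma fg_abM u v : fg_ab (u * v)%g = fg_ab u + fg_ab v.
Proof.
rewrite /fg_ab fgw_mul; elim: (fgw u) => [|x w IHw] /=; first by rewrite big_nil add0r.
by rewrite ab_push IHw big_cons addrA.
Qed.

Lemma fg_abV u : fg_ab u^-1%g = - fg_ab u.
Proof. by apply/eqP; rewrite -subr_eq0 opprK -fg_abM mulVg /fg_ab big_nil. Qed.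

Lemma fg_ab_gen i : fg_ab (fg_gen i) = delta_mx 0 i :> 'rV[int]_r.
Proof. by rewrite /fg_ab big_seq1 scale1r. Qed.

Definition ab_mx s : 'M[int]_r := \matrix_(i, j) fg_ab (s (fg_gen i)) 0 j.

Lemma ab_mapE s (v : 'rV[int]_r) : ab_map s v = v *m ab_mx s.
Proof. by apply/rowP => j; rewrite !mxE summxE; apply: eq_bigr => i _; rewrite !mxE. Qed.

Lemma delta_mul_ab_mx s i : delta_mx 0 i *m ab_mx s = fg_ab (s (fg_gen i)).
Proof. by rewrite -rowE; apply/rowP => j; rewrite !mxE. Qed.

Lemma fg_ab_morph s u :
  {morph s : u v / (u * v)%g} -> fg_ab (s u) = fg_ab u *m ab_mx s.
Proof.
move=> sM; elim/fg_ind: u => [|[i e] u IHu].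
  by rewrite (morph_mul1 sM) /fg_ab big_nil mul0mx.
rewrite sM !fg_abM IHu mulmxDl /fg_ab big_seq1 -/(fg_ab _); congr (_ + _).
rewrite /ab_letter /= -scalemxAl delta_mul_ab_mx.
case: e; rewrite ?fg_letter_inv ?(morph_mulV sM) ?fg_letter_gen.
  by rewrite fg_abV scaleN1r.
by rewrite scale1r.
Qed.

Lemma ab_mx_can s t :
  {morph t : u v / (u * v)%g} -> cancel s t -> ab_mx s *m ab_mx t = 1%:M.
Proof.
move=> tM st; apply/row_matrixP => i.
by rewrite row_mul rowE delta_mul_ab_mx -fg_ab_morph // st fg_ab_gen row1.
Qed.

Lemma ab_map_bij s : {morph s : u v / (u * v)%g} -> bijective s -> bijective (ab_map s).
Proof.
move=> sM [t st ts].
have tM : {morph t : u v / (u * v)%g} by move=> u v; apply: (can_inj st); rewrite sM !ts.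
by exists (ab_map t) => v; rewrite !ab_mapE -mulmxA ab_mx_can ?mulmx1.
Qed.

End Abelianisation.

Theorem proposition4p6 (r : nat) (s : FG r -> FG r)
    (hs : fg_hom s) (him : image_free_of_rank s) :
  (lim1_trivial s <-> bijective s) /\
  (~ bijective (ab_map s) -> ~ lim1_trivial s).
Proof.
have s_inj := image_free_of_rank_inj hs him.
have lim1_bij : lim1_trivial s -> bijective s.
  by move=> s_lim1; apply: (inj_surj_bij 1 s_inj (lim1_trivial_surj hs s_inj s_lim1)).
split; first by split; [exact: lim1_bij | exact: bij_lim1_trivial].
by move=> ab_nbij /lim1_bij/(ab_map_bij hs)/ab_nbij.
Qed.
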